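(* Let $G$ be a finite group, $H\leq G$, $x\in G$ and $h\in H$. If $hS_xh^{-1}=S_x$, then $h\in H_x$. In particular, if $hS_xh^{-1}\cap S_x\neq\varnothing$ then $h\in H_x$.
   Context: For $x\in G$, $H_x=\bigcap_{i\in\mathbb{Z}}x^iHx^{-i}$ and $S_x=H_x\cdot x\subseteq G$. *)

From mathcomp Require Import all_boot all_fingroup.
Set Implicit Arguments. Unset Strict Implicit. Unset Printing Implicit Defensive.
Import GroupScope.
Local Open Scope group_scope.

From mathcomp Require Import ssrint.
From mathcomp Require Import boolp.

Definition zpowg (gT : finGroupType) (x : gT) (i : int) : gT :=
  match i with
  | Posz n => x ^+ n
  | Negz n => (x ^+ n.+1)^-1
  end.

Definition conj_pow (gT : finGroupType) (H : {set gT}) (x : gT) (i : int)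
  : {set gT} := [set zpowg x i * h * zpowg x (- i) | h in H].

Definition Hx (gT : finGroupType) (H : {set gT}) (x : gT) : {set gT} :=
  [set y | `[< forall i : int, y \in conj_pow H x i >] ].

Definition Sx (gT : finGroupType) (H : {set gT}) (x : gT) : {set gT} :=
  Hx H x :* x.

(* H_x is the core of H under the cyclic group <[x]>, i.e. the largest
   subgroup of H normalised by x.  If h^-1 (b x) h = a x with a, b in H_x,
   then x h x^-1 = b^-1 h a lies in the double coset H_x h H_x.  As x
   normalises H_x, conjugation by x maps this double coset into itself; being
   contained in H and normalised by <[x]>, it lies in the core H_x, and so
   does h. *)

From mathcomp Require Import all_boot all_fingroup ssrint.
Import GroupScope.
Local Open Scope group_scope.

Section IntersectionOfConjugates.

Variable gT : finGroupType.
Implicit Types (x g h : gT) (K : {group gT}).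

Lemma zpowgN x (i : int) : zpowg x (- i) = (zpowg x i)^-1.
Proof. by case: i => [[|n]|n] //=; rewrite ?invg1 ?invgK. Qed.

Lemma zpowg_cycle x (i : int) : zpowg x i \in <[x]>.
Proof. by case: i => n /=; rewrite ?groupV mem_cycle. Qed.

Lemma conj_powE (H : {set gT}) x (i : int) :
  conj_pow H x i = H :^ (zpowg x i)^-1.
Proof.
by rewrite /conj_pow zpowgN; apply: eq_imset => z; rewrite conjgE invgK mulgA.
Qed.

Lemma Hx_gcore (H : {set gT}) x : Hx H x = gcore H <[x]>.
Proof.
apply/setP=> y; rewrite inE; apply/boolp.asboolP/bigcapP => [yHx g | yH i].
  case/cycleP=> n ->; have := yHx (- n%:Z)%R.
  by rewrite conj_powE zpowgN invgK.
by rewrite conj_powE yH ?groupV ?zpowg_cycle.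
Qed.

Lemma conj_rcoset_meet_dcoset K x h :
  (K :* x) :^ h^-1 :&: (K :* x) != set0 -> h ^ x^-1 \in K :* h * K.
Proof.
case/set0Pn=> z /setIP[]; rewrite mem_conjgV !mem_rcoset => Ka Kb.
set a := z ^ h * x^-1 in Ka; set b := z * x^-1 in Kb.
apply/mulsgP; exists (b^-1 * h) a => //.
  by rewrite mem_rcoset mulgK groupV.
by rewrite /a /b !conjgE invgK invMg invgK !mulgA mulgK mulgKV.
Qed.

Lemma double_coset_norm K g h :
  g \in 'N(K) -> h ^ g \in K :* h * K -> g \in 'N(K :* h * K).
Proof.
move=> nKg KhKhg; rewrite inE !conjsMg conjg_set1 (normP nKg).
have /(mulgS K)/(mulSg K) : [set h ^ g] \subset K :* h * K by rewrite sub1set.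
by rewrite !mulgA mulGid -!mulgA mulGid.
Qed.

Lemma mem_gcore_cycle (H : {group gT}) x h :
  h \in H -> h ^ x^-1 \in gcore H <[x]> :* h * gcore H <[x]> ->
  h \in gcore H <[x]>.
Proof.
move=> Hh KhKhx; set K := gcore H <[x]> in KhKhx *.
have nKx : x \in 'N(K) by rewrite -cycle_subG gcore_norm.
have sKhKH : K :* h * K \subset H by rewrite !mul_subG ?sub1set ?gcore_sub.
have nKhKx : <[x]> \subset 'N(K :* h * K).
  by rewrite cycle_subG -groupV double_coset_norm ?groupV.
apply: (subsetP (gcore_max sKhKH nKhKx)).
by apply/mulsgP; exists h 1; rewrite ?rcoset_refl ?group1 ?mulg1.
Qed.

End IntersectionOfConjugates.

Theorem lemma4p4 (gT : finGroupType) (G H : {group gT}) (x h : gT) :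
  H \subset G -> x \in G -> h \in H ->
  ((Sx H x) :^ h^-1 = Sx H x -> h \in Hx H x) /\
  ((Sx H x) :^ h^-1 :&: Sx H x != set0 -> h \in Hx H x).
Proof.
move=> _ _ Hh; rewrite /Sx Hx_gcore.
have meet_mem : (gcore H <[x]> :* x) :^ h^-1 :&: gcore H <[x]> :* x != set0 ->
    h \in gcore H <[x]>.
  by move=> /conj_rcoset_meet_dcoset; apply: mem_gcore_cycle.
split=> // Sxh; apply: meet_mem; rewrite Sxh setIid.
by apply/set0Pn; exists x; rewrite rcoset_refl.
Qed.
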